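(* Suppose (A1)–(A7) hold (see context). Let $\varpi^*=\mathrm{col}(\hat{\boldsymbol{x}}^*,\boldsymbol{z}^*,\boldsymbol{\lambda}^*,\boldsymbol{\mu}^* )\in\mathrm{zer}(\mathcal{A}+\mathcal{B})$ (equivalently $\varpi^*=\mathcal{T}\varpi^*$ with $\mathcal{T}$ as in the context). Then $\hat{\boldsymbol{x}}^*=\mathbf{1}_n\otimes\boldsymbol{x}^*$ for some $\boldsymbol{x}^*\in\mathbb{R}^q$, $\boldsymbol{\mu}^*=\mathbf{1}_m\otimes\mu^*$ for some $\mu^*\in\mathbb{R}^w$, and $$\mathbf{0}_{nq}\in R^T\boldsymbol{F}(\hat{\boldsymbol{x}}^* )+R^TH(R\hat{\boldsymbol{x}}^* )+R^T\boldsymbol{L}\boldsymbol{\lambda}^*+R^T\boldsymbol{\Lambda}^T\boldsymbol{\mu}^*,\quad \mathbf{0}_w\in b-\boldsymbol{A}R\hat{\boldsymbol{x}}^*+N_{\mathbb{R}^w_+}(\mu^* ),\quad \mathbf{0}=\boldsymbol{L}R\hat{\boldsymbol{x}}^*;$$ moreover $(\boldsymbol{x}^*,\boldsymbol{\lambda}^*,\mu^* )$ satisfies $$\mathbf{0}_q\in F(\boldsymbol{x}^* )+H(\boldsymbol{x}^* )+\boldsymbol{L}\boldsymbol{\lambda}^*+\boldsymbol{A}^T\mu^*,\quad \mathbf{0}_w\in b-\boldsymbol{A}\boldsymbol{x}^*+N_{\mathbb{R}^w_+}(\mu^* ),\quad \mathbf{0}_q=\boldsymbol{L}\boldsymbol{x}^*.$$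 Consequently $\boldsymbol{x}^*$ solves $\mathrm{GVI}(\Theta,\mathcal{K})$ and is a v-GNE of the multi-cluster game (both in the full-information and the partial-information formulation).
   Context: Setting. There are $m$ clusters; cluster $j$ has $n_j$ agents; agent $i$ of cluster $j$ chooses $x_i^j\in\mathbb{R}^{q_j}$; $x^j=\mathrm{col}(x_1^j,\dots,x_{n_j}^j)$, $\boldsymbol{x}=\mathrm{col}(x^1,\dots,x^m)\in\mathbb{R}^q$, $q=\sum_jn_jq_j$, $n=\sum_jn_j$; $\boldsymbol{x}^{-j}$ is $\boldsymbol{x}$ without block $x^j$. Agent cost $\theta_i^j=f_i^j(x^j,\boldsymbol{x}^{-j})+h_i^j(x_i^j)$, $f^j=\sum_if_i^j$, $h^j(x^j)=\sum_ih_i^j(x_i^j)$. Coupling: $A^j\in\mathbb{R}^{w\times q_j}$, $b^j\in\mathbb{R}^w$, $b=\sum_jb^j$, $\boldsymbol{A}^j=[A^j,\mathbf{0}_{w\times(n_jq_j-q_j)}]$, $\boldsymbol{A}=[\boldsymbol{A}^1,\dots,\boldsymbol{A}^m]$, $\boldsymbol{\Lambda}=\mathrm{blockdiag}(\boldsymbol{A}^1,\dots,\boldsymbol{A}^m)\in\mathbb{R}^{wm\times q}$, $\boldsymbol{b}=\mathrm{col}(b^1,\dots,b^m)$. Graphs: $\mathcal{G}^j$ undirected weighted graph on cluster $j$ with Laplacian $L^j$; $\mathcal{G}_L$ undirected weighted graph on the leaders (agent 1 of each cluster) with weights $w^{j,l}_{1,1}$ and Laplacian $L^0_m\in\mathbb{R}^{m\times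 m}$. $\boldsymbol{L}^j=L^j\otimes I_{q_j}$, $\boldsymbol{L}=\mathrm{blockdiag}(\boldsymbol{L}^j)\in\mathbb{R}^{q\times q}$, $L=\mathrm{blockdiag}(L^1,\dots,L^m)\in\mathbb{R}^{n\times n}$, $\hat{\boldsymbol{L}}=L\otimes I_q$, $\boldsymbol{L}^0_m=L^0_m\otimes I_w$; $\hat L^0_m\in\mathbb{R}^{n\times n}$ is partitioned into blocks of size $n_j\times n_l$, block $(j,l)$, $j\ne l$, having $(1,1)$ entry $-w^{j,l}_{1,1}$ and zeros elsewhere, block $(j,j)$ having $(1,1)$ entry $\sum_{l\ne j}w^{j,l}_{1,1}$ and zeros elsewhere; $\hat{\boldsymbol{L}}^0_m=\hat L^0_m\otimes I_q$. $s_2$, $s_{\max}$ denote second-smallest and largest eigenvalue. Feasible set $\mathcal{K}=\{\boldsymbol{x}\in\prod\Omega_i^j:\sum_jA^jx_1^j\le b,\ x_i^j=x_l^j\ \forall j,i,l\}$, $\Omega_i^j=\mathrm{dom}\,h_i^j$. $F(\boldsymbol{x})=\mathrm{col}(\nabla_{x^j}f^j(x^j,\boldsymbol{x}^{-j}))_j$, $H(\boldsymbol{x})=\partial h^1(x^1)\times\dots\times\partial h^m(x^m)$, $\Theta=F+H$; $\mathrm{GVI}(\Theta,\mathcal{K})$: find $\boldsymbol{x}^*\in\mathcal{K}$, $g\in\Theta(\boldsymbol{x}^* )$ with $\langle g,\boldsymbol{x}-\boldsymbol{x}^*\rangle\ge0\ \forall\boldsymbol{x}\in\mathcal{K}$;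 a v-GNE is a solution of this GVI. Partial information: agent $(j,i)$ holds an estimate $\hat{\boldsymbol{x}}_i^j\in\mathbb{R}^q$ of the whole profile whose cluster-$j$ block is the true $x^j$; $\hat{\boldsymbol{x}}=\mathrm{col}(\hat{\boldsymbol{x}}_i^j)\in\mathbb{R}^{nq}$ (ordered by $j$ then $i$); $\hat{\boldsymbol{x}}_i^{j,-j}$ is $\hat{\boldsymbol{x}}_i^j$ with the cluster-$j$ block removed; $R_i^j\in\mathbb{R}^{q_j\times q}$ extracts $x_i^j$ from $\hat{\boldsymbol{x}}_i^j$ and $R=\mathrm{blockdiag}(R_i^j)\in\mathbb{R}^{q\times nq}$, so $R\hat{\boldsymbol{x}}=\boldsymbol{x}$. Extended pseudo-gradient $\boldsymbol{F}(\hat{\boldsymbol{x}})=\mathrm{col}\big(\nabla_{x^j}\sum_if_i^j(x^j,\hat{\boldsymbol{x}}_i^{j,-j})\big)_j\in\mathbb{R}^q$. Operators: fix $c>0$ and positive step sizes $\rho_i^j,\tau_i^j,\sigma^j,\nu^j$; $\boldsymbol{\rho}=\mathrm{diag}(\rho_i^jI_q)$, $\boldsymbol{\sigma}=\mathrm{diag}(\sigma^jI_w)$, $\boldsymbol{\tau}=\mathrm{diag}(\tau_i^jI_{q_j})$, $\boldsymbol{\nu}=\mathrm{diag}(\nu^jI_w)$. Variable $\varpi=\mathrm{col}(\hat{\boldsymbol{x}},\boldsymbol{z},\boldsymbol{\lambda},\boldsymbol{\mu})\in\mathbb{R}^{nq}\times\mathbb{R}^{wm}\times\mathbb{R}^q\times\mathbb{R}^{wm}$.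 $\Psi=\mathrm{diag}(\boldsymbol{\rho}^{-1},\boldsymbol{\sigma}^{-1},\boldsymbol{\tau}^{-1},\boldsymbol{\nu}^{-1})$; $\Phi=\begin{bmatrix}0&0&R^T\boldsymbol{L}^T&R^T\boldsymbol{\Lambda}^T\\0&0&0&\boldsymbol{L}^0_m\\-\boldsymbol{L}R&0&0&0\\-\boldsymbol{\Lambda}R&-\boldsymbol{L}^0_m&0&0\end{bmatrix}$; $\mathcal{A}(\varpi)=\mathrm{col}(R^T\boldsymbol{F}(\hat{\boldsymbol{x}})+c(\hat{\boldsymbol{L}}+\hat{\boldsymbol{L}}^0_m)\hat{\boldsymbol{x}},\mathbf{0}_{wm},\mathbf{0}_q,\boldsymbol{b})+\Phi\varpi$; $\mathcal{B}(\varpi)=R^TH(R\hat{\boldsymbol{x}})\times\{\mathbf{0}_{wm}\}\times\{\mathbf{0}_q\}\times N_{\mathbb{R}^{wm}_+}(\boldsymbol{\mu})$, where $R^TH(R\hat{\boldsymbol{x}})=\{R^Tv:v\in H(R\hat{\boldsymbol{x}})\}$. $\mathcal{T}:=\Psi^{-1}\mathcal{A}+(\mathrm{Id}-\Psi^{-1}\mathcal{A})\circ(\mathrm{Id}+\Psi^{-1}\mathcal{B})^{-1}\circ(\mathrm{Id}-\Psi^{-1}\mathcal{A})$. Let $\ell_{\mathcal{A}}=\kappa+c(s_{\max}(L)+s_{\max}(L^0_m))+2s_{\max}(L)+2s_{\max}(L^0_m)+2\max_j\sigma_{\max}(A^j)$. Assumptions: (A1) each $f_i^j(\cdot,\boldsymbol{x}^{-j})$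 convex and $C^1$, each $h_i^j$ lsc convex with $\mathrm{dom}\,h_i^j$ nonempty compact convex; (A2) $\mathcal{K}$ nonempty, Slater's condition holds; (A3) every $\mathcal{G}^j$ and $\mathcal{G}_L$ connected; (A4) $F$ is $\eta$-strongly monotone and $\kappa_0$-Lipschitz; (A5) $\mathrm{GVI}(\Theta,\mathcal{K})$ has a solution; (A6) $\boldsymbol{F}$ is $\kappa$-Lipschitz; (A7) $\Psi\succ0$ and $\|\Psi^{-1}\|<1/\ell_{\mathcal{A}}$. *)

From HB Require Import structures.
From mathcomp Require Import all_boot all_order all_algebra.
From mathcomp Require Import all_classical all_reals all_analysis.
Import Order.TTheory GRing.Theory Num.Theory.
Import numFieldNormedType.Exports.

Set Implicit Arguments.
Unset Strict Implicit.
Unset Printing Implicit Defensive.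

Local Open Scope classical_set_scope.
Local Open Scope ring_scope.

Section Generic.
Variable R : realType.

Definition mdot a b (X Y : 'M[R]_(a, b)) : R := \sum_i \sum_k X i k * Y i k.

Definition grad a b (g : 'M[R]_(a, b) -> R) (X : 'M[R]_(a, b)) : 'M[R]_(a, b) :=
  \matrix_(i, k) ('d g X (delta_mx i k)).

Definition convex_fun a b (g : 'M[R]_(a, b) -> R) :=
  forall X Y (t : R), 0 <= t <= 1 ->
    g (t *: X + (1 - t) *: Y) <= t * g X + (1 - t) * g Y.

Definition econvex_fun a b (g : 'M[R]_(a, b) -> \bar R) :=
  forall X Y (t : R), 0 <= t <= 1 ->
    (g (t *: X + (1 - t) *: Y)%R <= t%:E * g X + (1 - t)%:E * g Y)%E.

Definition convex_setM a b (C : set 'M[R]_(a, b)) :=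
  forall X Y (t : R), C X -> C Y -> 0 <= t <= 1 -> C (t *: X + (1 - t) *: Y).

Definition edom a b (g : 'M[R]_(a, b) -> \bar R) : set 'M[R]_(a, b) :=
  [set X | (g X < +oo)%E].

Definition subdiff a b (g : 'M[R]_(a, b) -> \bar R) (X G : 'M[R]_(a, b)) :=
  (g X < +oo)%E /\ forall Y, (g X + (mdot G (Y - X)%R)%:E <= g Y)%E.

Definition aff_hull a b (C : set 'M[R]_(a, b)) : set 'M[R]_(a, b) :=
  [set Y | exists (N : nat) (p : 'I_N -> 'M[R]_(a, b)) (t : 'I_N -> R),
      (forall k, C (p k)) /\ \sum_k t k = 1 /\ Y = \sum_k t k *: p k].

Definition relint a b (C : set 'M[R]_(a, b)) : set 'M[R]_(a, b) :=
  [set X | C X /\ exists2 e : R, 0 < e &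
      forall Y, aff_hull C Y -> Num.sqrt (mdot (Y - X) (Y - X)) < e -> C Y].

Definition normal_cone a b (C : set 'M[R]_(a, b)) (X V : 'M[R]_(a, b)) :=
  C X /\ forall Y, C Y -> mdot V (Y - X) <= 0.

Definition orthant a b : set 'M[R]_(a, b) := [set X | forall i k, 0 <= X i k].

Definition wgraph k (Wt : 'I_k -> 'I_k -> R) :=
  (forall i l, Wt i l = Wt l i) /\ (forall i l, 0 <= Wt i l).

Definition wconnected k (Wt : 'I_k -> 'I_k -> R) :=
  forall i l, connect [rel x y | 0 < Wt x y] i l.

Definition laplacian k (Wt : 'I_k -> 'I_k -> R) : 'M[R]_k :=
  \matrix_(i, l) (if i == l then \sum_(r | r != i) Wt i r else - Wt i l).

Definition is_smax k (M : 'M[R]_k) (s : R) :=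
  eigenvalue M s /\ forall t, eigenvalue M t -> t <= s.

(* leader (= first agent, index 0) row of a matrix whose rows are agents *)
Definition lead a b (X : 'M[R]_(a, b)) : 'rV[R]_b :=
  \sum_(i : 'I_a | val i == 0%N) row i X.

End Generic.

(* m clusters, cluster j has n j agents, each with decision in R^(qd j)*)
(* the decision x^j of cluster j is the matrix 'M_(n j, qd j) whose    *)
(* row i is x_i^j; coupling constraints live in R^w, written as rows.  *)
Section Game.
Variable R : realType.
Variables (m : nat) (n qd : 'I_m -> nat) (w : nat).

Definition prof := forall j : 'I_m, 'M[R]_(n j, qd j).
Definition others (j : 'I_m) := forall l : 'I_m, l != j -> 'M[R]_(n l, qd l).
Definition minus (x : prof) (j : 'I_m) : others j := fun l _ => x l.
Arguments minus x j : clear implicits.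
(* R^{nq} : stacked estimates, agent (j,i) holds a profile *)
Definition xhat_t := forall j : 'I_m, 'I_(n j) -> prof.
Definition wm_t := 'I_m -> 'rV[R]_w.

Definition padd (x y : prof) : prof := fun j => x j + y j.
Definition popp (x : prof) : prof := fun j => - x j.
Definition pzero : prof := fun j => 0.
Definition pdot (x y : prof) : R := \sum_j mdot (x j) (y j).

Definition xadd (X Y : xhat_t) : xhat_t := fun j i => padd (X j i) (Y j i).
Definition xopp (X : xhat_t) : xhat_t := fun j i => popp (X j i).
Definition xscale (c : R) (X : xhat_t) : xhat_t := fun j i l => c *: X j i l.
Definition xzero : xhat_t := fun j i => pzero.
Definition xdot (X Y : xhat_t) : R := \sum_j \sum_i pdot (X j i) (Y j i).

Definition wadd (u v : wm_t) : wm_t := fun j => u j + v j.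
Definition wopp (u : wm_t) : wm_t := fun j => - u j.
Definition wzero : wm_t := fun j => 0.
Definition wdot (u v : wm_t) : R := \sum_j mdot (u j) (v j).

Definition at_block (j : 'I_m) (Y : 'M[R]_(n j, qd j)) : prof :=
  fun l => match j =P l with
           | ReflectT e => eq_rect j (fun l => 'M[R]_(n l, qd l)) Y l e
           | ReflectF _ => 0
           end.

(* R : extracts x_i^j from the estimate of agent (j,i);  R xhat = x *)
Definition Rop (X : xhat_t) : prof := fun j => \matrix_(i, k) X j i j i k.
Definition RT (v : prof) : xhat_t :=
  fun j i => at_block (\matrix_(a, k) (if a == i then v j a k else 0)).

Section Data.
Unset Implicit Arguments.
Variable W : forall j : 'I_m, 'I_(n j) -> 'I_(n j) -> R.
Variable W0 : 'I_m -> 'I_m -> R.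
Variable f : forall j : 'I_m, 'I_(n j) -> 'M[R]_(n j, qd j) -> others j -> R.
Variable h : forall j : 'I_m, 'I_(n j) -> 'rV[R]_(qd j) -> \bar R.
Variable A : forall j : 'I_m, 'M[R]_(w, qd j).
Variable bj : wm_t.

Set Implicit Arguments.

Definition bsum : 'rV[R]_w := \sum_j bj j.

(* bold L = blockdiag(L^j (x) I_{q_j}) and its transpose *)
Definition bL (x : prof) : prof := fun j => laplacian (W j) *m x j.
Definition bLT (x : prof) : prof := fun j => (laplacian (W j))^T *m x j.
Definition Lbig : 'M[R]_(\sum_j n j) := \mxdiag_(j < m) laplacian (W j).
Definition L0 : 'M[R]_m := laplacian W0.
(* hat L = L (x) I_q *)
Definition Lhat (X : xhat_t) : xhat_t :=
  fun j i l => \sum_k (laplacian (W j)) i k *: X j k l.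
(* hat L^0_m (x) I_q : acts only between leaders *)
Definition L0hat (X : xhat_t) : xhat_t :=
  fun j i l => if val i == 0%N then
     \sum_(j' : 'I_m) \sum_(k : 'I_(n j') | val k == 0%N) L0 j j' *: X j' k l
   else 0.
(* bold L^0_m = L^0_m (x) I_w *)
Definition bL0 (u : wm_t) : wm_t := fun j => \sum_l L0 j l *: u l.

Definition Lam (x : prof) : wm_t := fun j => lead (x j) *m (A j)^T.
Definition LamT (u : wm_t) : prof :=
  fun j => \matrix_(i, k) (if val i == 0%N then (u j *m A j) 0 k else 0).
Definition bA (x : prof) : 'rV[R]_w := \sum_j lead (x j) *m (A j)^T.
Definition bAT (mu : 'rV[R]_w) : prof :=
  fun j => \matrix_(i, k) (if val i == 0%N then (mu *m A j) 0 k else 0).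

Definition Fpg (x : prof) : prof :=
  fun j => grad (fun Y => \sum_i f j i Y (minus x j)) (x j).
Definition BF (X : xhat_t) : prof :=
  fun j => grad (fun Y => \sum_i f j i Y (minus (X j i) j)) (Rop X j).

Definition hj (j : 'I_m) (Y : 'M[R]_(n j, qd j)) : \bar R :=
  (\sum_i h j i (row i Y))%E.
Definition Hset (x v : prof) := forall j, subdiff (@hj j) (x j) (v j).

Definition Omega j i : set 'rV[R]_(qd j) := edom (h j i).
Arguments Omega j i : clear implicits.
Definition Kset (x : prof) :=
  (forall j i, Omega j i (row i (x j))) /\
  (forall k, bA x 0 k <= bsum 0 k) /\
  (forall j i l, row i (x j) = row l (x j)).
Definition GVI_sol (x : prof) :=
  Kset x /\ exists v, Hset x v /\
    forall y, Kset y -> 0 <= pdot (padd (Fpg x) v) (padd y (popp x)).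

Definition orthant_wm (u : wm_t) := forall j k, 0 <= u j 0 k.
Definition ncone_wm (mu v : wm_t) :=
  orthant_wm mu /\ forall y, orthant_wm y -> wdot v (wadd y (wopp mu)) <= 0.

Definition pw := (xhat_t * wm_t * prof * wm_t)%type.
Definition pw_add (p1 p2 : pw) : pw :=
  let: (x1, z1, l1, m1) := p1 in let: (x2, z2, l2, m2) := p2 in
  (xadd x1 x2, wadd z1 z2, padd l1 l2, wadd m1 m2).
Definition pw_zero : pw := (xzero, wzero, pzero, wzero).

Definition Aop (c : R) (p : pw) : pw :=
  let: (X, z, lam, mu) := p in
  ( xadd (xadd (xadd (RT (BF X)) (xscale c (xadd (Lhat X) (L0hat X))))
               (RT (bLT lam))) (RT (LamT mu)),
    bL0 mu,
    popp (bL (Rop X)),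
    wadd (wadd bj (wopp (Lam (Rop X)))) (wopp (bL0 z)) ).

Definition Bop (p q : pw) :=
  let: (X, z, lam, mu) := p in
  let: (X', z', lam', mu') := q in
  (exists v, Hset (Rop X) v /\ X' = RT v) /\ z' = wzero /\ lam' = pzero /\
  ncone_wm mu mu'.

Definition zer_AB (c : R) (p : pw) := exists q, Bop p q /\ pw_add (Aop c p) q = pw_zero.

Definition Psi_inv (rho tau : forall j : 'I_m, 'I_(n j) -> R) (sig nu : 'I_m -> R)
  (p : pw) : pw :=
  let: (X, z, lam, mu) := p in
  (fun j i l => rho j i *: X j i l,
   fun j => sig j *: z j,
   fun j => \matrix_(i, k) (tau j i * lam j i k),
   fun j => nu j *: mu j).
Definition pw_norm (p : pw) : R :=
  let: (X, z, lam, mu) := p in Num.sqrt (xdot X X + wdot z z + pdot lam lam + wdot mu mu).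
Definition is_opnorm (T : pw -> pw) (c : R) :=
  0 <= c /\ (forall p, pw_norm (T p) <= c * pw_norm p) /\
  (forall c', 0 <= c' -> (forall p, pw_norm (T p) <= c' * pw_norm p) -> c <= c').

End Data.
End Game.

Arguments pzero {R m n qd}.
Arguments xzero {R m n qd}.
Arguments wzero {R m w}.
Arguments RT {R m n qd} v.
Arguments minus {R m n qd} x j.
Arguments at_block {R m n qd j} Y.

From HB Require Import structures.
From mathcomp Require Import all_boot all_order all_algebra.
From mathcomp Require Import all_classical all_reals all_analysis.
From mathcomp Require Import ring lra.
Import Order.TTheory GRing.Theory Num.Theory.
Import numFieldNormedType.Exports.
Local Open Scope classical_set_scope.
Local Open Scope ring_scope.
Set Implicit Arguments.
Unset Strict Implicit.
Unset Printing Implicit Defensive.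

(* At a zero of A + B the first block row reads
     R^T (F + v + L lambda + Lambda^T mu) + c (L_hat + L0_hat) x_hat = 0.
   Summing over all agents inverts R^T and kills the consensus term, because
   Laplacians have zero column sums; so the stationarity condition holds and the
   consensus term vanishes on its own. Its quadratic form is the sum of the
   Dirichlet energies of the cluster graphs and of the leader graph, so
   connectivity forces all estimates to coincide. In the same way L0 mu = 0 gives
   a common multiplier and L R x_hat = 0 equal copies inside each cluster, and
   summing the last block row over the clusters gives b - A x + V = 0 with V
   normal to the orthant at mu. These are the KKT conditions of the GVI; pairing
   them with y - x for a feasible y yields the variational inequality.
   Only (A3), n_j > 0, c > 0 and the properness of the h_i^j are used: the
   step-size condition (A7) concerns fixed points of T, not zeros of A + B. *)

Lemma big_val0 (V : zmodType) p (i0 : 'I_p) (F : 'I_p -> V) : val i0 = 0%N ->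
  \sum_(k | val k == 0%N) F k = F i0.
Proof.
move=> i00; rewrite (bigD1 i0) ?i00 //= big1 ?addr0 // => k /andP [/eqP k0].
by rewrite (_ : k = i0) ?eqxx //; apply: ord_inj; rewrite k0 i00.
Qed.

Section Mdot.
Variables (R : realType) (a b : nat).
Implicit Types X Y Z : 'M[R]_(a, b).

Lemma mdotC X Y : mdot X Y = mdot Y X.
Proof. by apply: eq_bigr => i _; apply: eq_bigr => k _; rewrite mulrC. Qed.

Lemma mdotDr X Y Z : mdot X (Y + Z) = mdot X Y + mdot X Z.
Proof.
rewrite /mdot -big_split; apply: eq_bigr => i _; rewrite -big_split.
by apply: eq_bigr => k _; rewrite mxE mulrDr.
Qed.

Lemma mdotNr X Y : mdot X (- Y) = - mdot X Y.
Proof.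
rewrite /mdot -sumrN; apply: eq_bigr => i _; rewrite -sumrN.
by apply: eq_bigr => k _; rewrite mxE mulrN.
Qed.

Lemma mdotBr X Y Z : mdot X (Y - Z) = mdot X Y - mdot X Z.
Proof. by rewrite mdotDr mdotNr. Qed.

Lemma mdotDl X Y Z : mdot (Y + Z) X = mdot Y X + mdot Z X.
Proof. by rewrite mdotC mdotDr !(mdotC X). Qed.

Lemma mdotNl X Y : mdot (- Y) X = - mdot Y X.
Proof. by rewrite mdotC mdotNr mdotC. Qed.

Lemma mdot_suml (I : finType) (F : I -> 'M[R]_(a, b)) Y :
  mdot (\sum_j F j) Y = \sum_j mdot (F j) Y.
Proof.
rewrite /mdot [RHS]exchange_big; apply: eq_bigr => i _.
rewrite [RHS]exchange_big; apply: eq_bigr => k _.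
by rewrite summxE mulr_suml.
Qed.

Lemma mdot_delta X i k : mdot X (delta_mx i k) = X i k.
Proof.
rewrite /mdot (bigD1 i) //= [X in _ + X]big1 ?addr0.
  rewrite (bigD1 k) //= [X in _ + X]big1 ?addr0; first by rewrite mxE !eqxx mulr1.
  by move=> k' k'k; rewrite mxE eqxx (negbTE k'k) mulr0.
by move=> i' i'i; apply: big1 => k' _; rewrite mxE (negbTE i'i) mulr0.
Qed.

Lemma mdot_ge0 X Y : orthant X -> orthant Y -> 0 <= mdot X Y.
Proof.
by move=> X0 Y0; apply: sumr_ge0 => i _; apply: sumr_ge0 => k _; apply: mulr_ge0.
Qed.

(* Testing the normal-cone inequality at [0], [2 mu] and [mu + e_ik]. *)
Lemma normal_cone_orthant mu V : normal_cone (@orthant R a b) mu V ->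
  mdot V mu = 0 /\ forall i k, V i k <= 0.
Proof.
move=> [mu0 nV].
have at0 : - mdot V mu <= 0.
  by have := nV 0; rewrite sub0r mdotNr; apply=> i k; rewrite mxE.
have at2 : mdot V mu <= 0.
  have := nV (mu + mu); rewrite addrK; apply=> i k; rewrite mxE.
  exact: addr_ge0 (mu0 i k) (mu0 i k).
split; first lra.
move=> i k; have := nV (mu + delta_mx i k); rewrite addrAC subrr add0r mdot_delta.
by apply=> i' k'; rewrite mxE; apply: addr_ge0 (mu0 i' k') _; rewrite mxE ler0n.
Qed.

End Mdot.

Section Laplacian.
Variables (R : realType) (k : nat) (Wt : 'I_k -> 'I_k -> R).

Lemma laplacian_row_sum i : \sum_l laplacian Wt i l = 0.
Proof.
rewrite (bigD1 i) //= mxE eqxx [X in _ + X](eq_bigr (fun l => - Wt i l)).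
  by rewrite sumrN addrN.
by move=> l li; rewrite mxE eq_sym (negbTE li).
Qed.

Lemma laplacian_mulE (x : 'I_k -> R) i :
  \sum_l laplacian Wt i l * x l = \sum_l Wt i l * (x i - x l).
Proof.
rewrite (bigD1 i) //= mxE eqxx [RHS](bigD1 i) //= subrr mulr0 add0r mulr_suml.
rewrite -big_split /=; apply: eq_bigr => l li; rewrite mxE eq_sym (negbTE li).
ring.
Qed.

Hypothesis Wt_sym : forall i l, Wt i l = Wt l i.

Lemma laplacian_sym i l : laplacian Wt i l = laplacian Wt l i.
Proof. by rewrite !mxE eq_sym; case: eqP => [->|_] //; rewrite Wt_sym. Qed.

Lemma trmx_laplacian : (laplacian Wt)^T = laplacian Wt.
Proof. by apply/matrixP => i l; rewrite mxE laplacian_sym. Qed.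

Lemma laplacian_col_sum l : \sum_i laplacian Wt i l = 0.
Proof. under eq_bigr do rewrite laplacian_sym. exact: laplacian_row_sum. Qed.

Lemma mdot_laplacian_const q (M D : 'M[R]_(k, q)) :
  (forall i l c, D i c = D l c) -> mdot (laplacian Wt *m M) D = 0.
Proof.
move=> Dconst; rewrite /mdot exchange_big; apply: big1 => c _.
under eq_bigr => i _ do rewrite mxE mulr_suml.
rewrite exchange_big; apply: big1 => l _.
under eq_bigr => i _ do rewrite (Dconst i l) -mulrA.
by rewrite -mulr_suml laplacian_col_sum mul0r.
Qed.

Definition laplacian_form (x : 'I_k -> R) :=
  \sum_i x i * \sum_l laplacian Wt i l * x l.

Lemma laplacian_form_sqr x :
  laplacian_form x *+ 2 = \sum_i \sum_l Wt i l * (x i - x l) ^+ 2.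
Proof.
have E : laplacian_form x = \sum_i \sum_l Wt i l * (x i * (x i - x l)).
  apply: eq_bigr => i _; rewrite laplacian_mulE mulr_sumr.
  by apply: eq_bigr => l _; ring.
have E' : laplacian_form x = \sum_i \sum_l Wt i l * (x l * (x l - x i)).
  rewrite E exchange_big; apply: eq_bigr => i _; apply: eq_bigr => l _.
  by rewrite Wt_sym.
rewrite mulr2n {1}E E' -big_split; apply: eq_bigr => i _; rewrite -big_split.
by apply: eq_bigr => l _ /=; ring.
Qed.

Hypothesis Wt_ge0 : forall i l, 0 <= Wt i l.

Lemma laplacian_form_ge0 x : 0 <= laplacian_form x.
Proof.
have : 0 <= laplacian_form x *+ 2.
  rewrite laplacian_form_sqr; apply: sumr_ge0 => i _; apply: sumr_ge0 => l _.
  by rewrite mulr_ge0 // sqr_ge0.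
rewrite mulr2n; lra.
Qed.

Hypothesis Wt_conn : wconnected Wt.

Lemma laplacian_form_eq0 x : laplacian_form x = 0 -> forall i l, x i = x l.
Proof.
move=> x0.
have S0 : \sum_i \sum_l Wt i l * (x i - x l) ^+ 2 = 0.
  by rewrite -laplacian_form_sqr x0 mul0rn.
have term_ge0 i l : 0 <= Wt i l * (x i - x l) ^+ 2 by rewrite mulr_ge0 // sqr_ge0.
have edge i l : 0 < Wt i l -> x i = x l.
  move=> Wil; have Si : \sum_l Wt i l * (x i - x l) ^+ 2 = 0.
    by apply: (psumr_eq0P _ S0) => // i' _; apply: sumr_ge0.
  move/eqP: (psumr_eq0P (fun l _ => term_ge0 i l) Si (i:=l) isT).
  by rewrite mulf_eq0 (gt_eqF Wil) sqrf_eq0 subr_eq0 => /eqP.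
move=> i l; have /connectP [p ip ->] := Wt_conn i l.
elim: p i ip => //= y p IH i /andP [iy yp].
by rewrite (edge _ _ iy) (IH _ yp).
Qed.

Lemma laplacian_ker_const x :
  (forall i, \sum_l laplacian Wt i l * x l = 0) -> forall i l, x i = x l.
Proof.
by move=> Lx0; apply: laplacian_form_eq0; apply: big1 => i _; rewrite Lx0 mulr0.
Qed.

End Laplacian.

Section Agents.
Variables (R : realType) (m : nat) (n qd : 'I_m -> nat).
Implicit Types (u v : prof R n qd) (X : xhat_t R n qd).

Lemma at_block_id j (Y : 'M[R]_(n j, qd j)) : at_block (n:=n) Y j = Y.
Proof.
by rewrite /at_block; case: (j =P j) => [e|/(_ erefl)//]; rewrite (eq_axiomK e).
Qed.

Lemma at_block_ne j l (Y : 'M[R]_(n j, qd j)) : j != l -> at_block (n:=n) Y l = 0.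
Proof. by rewrite /at_block; case: (j =P l) => // ->; rewrite eqxx. Qed.

Lemma RT_id v j i a b : RT v j i j a b = if a == i then v j a b else 0.
Proof. by rewrite /RT at_block_id mxE. Qed.

Lemma RT_ne v j i l : j != l -> RT v j i l = 0.
Proof. exact: at_block_ne. Qed.

Lemma RT_padd u v : RT (padd u v) = xadd (RT u) (RT v).
Proof.
apply: functional_extensionality_dep => j; apply: funext => i.
apply: functional_extensionality_dep => l; rewrite /xadd /padd.
have [<-|jl] := eqVneq j l; last by rewrite !RT_ne // addr0.
by apply/matrixP => a b; rewrite !mxE !RT_id mxE; case: (a == i); rewrite ?addr0.
Qed.

Lemma RT_pzero : RT pzero = xzero :> xhat_t R n qd.
Proof.
apply: functional_extensionality_dep => j; apply: funext => i.
apply: functional_extensionality_dep => l; rewrite /xzero /pzero.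
have [<-|jl] := eqVneq j l; last by rewrite RT_ne.
by apply/matrixP => a b; rewrite RT_id !mxE; case: (a == i).
Qed.

(* Left multiplication by [1_n^T (x) I_q]. *)
Definition agent_sum X : prof R n qd := fun l => \sum_j \sum_i X j i l.

Lemma agent_sum_RT v l : agent_sum (RT v) l = v l.
Proof.
apply/matrixP => a b; rewrite /agent_sum summxE (bigD1 l) //= [X in _ + X]big1 ?addr0.
  rewrite summxE; under eq_bigr => i _ do rewrite RT_id.
  by rewrite (bigD1 a) //= eqxx big1 ?addr0 // => i /negbTE; rewrite eq_sym => ->.
by move=> j jl; rewrite summxE big1 // => i _; rewrite RT_ne ?mxE.
Qed.

Lemma LhatE W X j (i : 'I_(n j)) l a b :
  Lhat W X i l a b = \sum_k laplacian (W j) i k * X j k l a b.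
Proof. by rewrite summxE; apply: eq_bigr => k _; rewrite mxE. Qed.

Lemma L0hatE W0 X j (i : 'I_(n j)) l a b :
  L0hat W0 X i l a b = if val i == 0%N then
     \sum_j' \sum_(k | val k == 0%N) laplacian W0 j j' * X j' k l a b else 0.
Proof.
rewrite /L0hat; case: ifP => _; last by rewrite mxE.
rewrite summxE; apply: eq_bigr => j' _; rewrite summxE.
by apply: eq_bigr => k _; rewrite mxE.
Qed.

Variables (W : forall j, 'I_(n j) -> 'I_(n j) -> R) (W0 : 'I_m -> 'I_m -> R).
Arguments W : clear implicits.
Hypothesis W_graph : forall j : 'I_m, wgraph (W j) /\ wconnected (W j).
Hypothesis W0_graph : wgraph W0 /\ wconnected W0.
Hypothesis n_gt0 : forall j : 'I_m, (0 < n j)%N.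

Let W_sym (j : 'I_m) : forall i l, W j i l = W j l i := (W_graph j).1.1.
Let W0_sym : forall i l, W0 i l = W0 l i := W0_graph.1.1.
Arguments W_sym : clear implicits.

Lemma agent_sum_Lhat X l : agent_sum (Lhat W X) l = 0.
Proof.
apply: big1 => j _; rewrite exchange_big; apply: big1 => k _.
by rewrite -scaler_suml laplacian_col_sum ?scale0r.
Qed.

Lemma agent_sum_L0hat X l : agent_sum (L0hat W0 X) l = 0.
Proof.
pose Y j' := \sum_(k : 'I_(n j') | val k == 0%N) X j' k l.
have E j : \sum_(i < n j) L0hat W0 X i l = \sum_j' laplacian W0 j j' *: Y j'.
  rewrite /L0hat -big_mkcond /= (big_val0 _ (i0 := Ordinal (n_gt0 j))) //.
  by apply: eq_bigr => j' _; rewrite scaler_sumr.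
rewrite /agent_sum; under eq_bigr do rewrite E.
by rewrite exchange_big; apply: big1 => k _; rewrite -scaler_suml laplacian_col_sum ?scale0r.
Qed.

Lemma two_level_consensus (y : forall j, 'I_(n j) -> R) :
  (forall j i, \sum_k laplacian (W j) i k * y j k +
     (if val i == 0%N then \sum_j' \sum_(k | val k == 0%N) laplacian W0 j j' * y j' k
      else 0) = 0) ->
  forall j i j' i', y j i = y j' i'.
Proof.
move=> Ly0; pose y0 j := \sum_(k | val k == 0%N) y j k.
have forms0 : \sum_j laplacian_form (W j) (y j) + laplacian_form W0 y0 = 0.
  have -> : laplacian_form W0 y0 = \sum_j \sum_i y j i *
      (if val i == 0%N then \sum_j' \sum_(k | val k == 0%N) laplacian W0 j j' * y j' k
       else 0).
    apply: eq_bigr => j _; rewrite {1}/y0 mulr_suml big_mkcond /=.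
    apply: eq_bigr => i _; case: ifP => _; last by rewrite mulr0.
    by congr (_ * _); apply: eq_bigr => j' _; rewrite mulr_sumr.
  rewrite -big_split /=; apply: big1 => j _.
  by rewrite /laplacian_form -big_split /=; apply: big1 => i _; rewrite -mulrDr Ly0 mulr0.
have form_ge0 j : 0 <= laplacian_form (W j) (y j).
  exact: laplacian_form_ge0 (W_sym j) (W_graph j).1.2 _.
have form0_ge0 : 0 <= laplacian_form W0 y0.
  exact: laplacian_form_ge0 W0_sym W0_graph.1.2 _.
have forms_ge0 : 0 <= \sum_j laplacian_form (W j) (y j) by apply: sumr_ge0.
have cluster_forms0 : \sum_j laplacian_form (W j) (y j) = 0 by lra.
have leader_form0 : laplacian_form W0 y0 = 0 by lra.
have in_cluster j : forall i i', y j i = y j i'.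
  apply: laplacian_form_eq0 (W_sym j) (W_graph j).1.2 (W_graph j).2 _ _.
  exact: (psumr_eq0P (fun j _ => form_ge0 j) cluster_forms0).
have leaders : forall j j', y0 j = y0 j'.
  exact: laplacian_form_eq0 W0_sym W0_graph.1.2 W0_graph.2 _ leader_form0.
have y0E j i : y0 j = y j i.
  by rewrite /y0 (big_val0 _ (i0 := Ordinal (n_gt0 j))) //; apply: in_cluster.
by move=> j i j' i'; rewrite -(y0E j i) (leaders j j') (y0E j' i').
Qed.

Lemma consensus_Rop X :
  (forall j (i : 'I_(n j)) l, Lhat W X i l + L0hat W0 X i l = 0) ->
  forall j i, X j i = Rop X.
Proof.
move=> LX j i; apply: functional_extensionality_dep => l; apply/matrixP => a b.
rewrite mxE; apply: (two_level_consensus (y := fun j i => X j i l a b)) => j' i'.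
by move/matrixP/(_ a b): (LX j' i' l); rewrite !mxE LhatE L0hatE.
Qed.

Lemma bL_ker_rows (x : prof R n qd) :
  bL W x = pzero -> forall j i l, row i (x j) = row l (x j).
Proof.
move=> Lx0 j i l; apply/rowP => k; rewrite !mxE.
apply: (laplacian_ker_const (W_sym j) (W_graph j).1.2 (W_graph j).2 (x := fun i => x j i k)).
by move=> i'; have := congr1 (fun F : prof R n qd => F j i' k) Lx0; rewrite /bL /pzero !mxE.
Qed.

Lemma bLT_bL (lam : prof R n qd) : bLT W lam = bL W lam.
Proof.
by apply: functional_extensionality_dep => j; rewrite /bLT /bL trmx_laplacian.
Qed.

Variable w : nat.
Implicit Types z : wm_t R m w.

Lemma bL0_ker_const z : (forall j, bL0 W0 z j = 0) -> forall j l, z j = z l.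
Proof.
move=> Lz0 j l; apply/rowP => k.
apply: (laplacian_ker_const W0_sym W0_graph.1.2 W0_graph.2 (x := fun j => z j 0 k)) => j'.
move/rowP/(_ k): (Lz0 j'); rewrite /bL0 summxE mxE => Lz0k.
by rewrite -[RHS]Lz0k; apply: eq_bigr => l' _; rewrite [RHS]mxE.
Qed.

Lemma sum_bL0 z : \sum_j bL0 W0 z j = 0.
Proof.
rewrite /bL0 exchange_big; apply: big1 => l _.
by rewrite -scaler_suml laplacian_col_sum // scale0r.
Qed.

Variable c : R.
Hypothesis c_neq0 : c != 0.

Lemma RT_laplacian_split u X :
  (forall j (i : 'I_(n j)) l, RT u j i l + c *: (Lhat W X i l + L0hat W0 X i l) = 0) ->
  u = pzero /\ forall j (i : 'I_(n j)) l, Lhat W X i l + L0hat W0 X i l = 0.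
Proof.
move=> E.
have u0 : u = pzero.
  apply: functional_extensionality_dep => l; rewrite -[u l]agent_sum_RT /pzero.
  transitivity (agent_sum (RT u) l +
                c *: (agent_sum (Lhat W X) l + agent_sum (L0hat W0 X) l)).
    by rewrite agent_sum_Lhat agent_sum_L0hat addr0 scaler0 addr0.
  rewrite /agent_sum -big_split scaler_sumr -big_split /=; apply: big1 => j _.
  by rewrite -big_split scaler_sumr -big_split; apply: big1 => i _; apply: E.
split=> // j i l; apply/eqP; move/eqP: (E j i l).
by rewrite u0 RT_pzero /xzero /pzero add0r scalemx_eq0 (negbTE c_neq0).
Qed.

End Agents.

Section Multipliers.
Variables (R : realType) (m w : nat).
Implicit Types u v : wm_t R m w.

(* Averaging rather than picking one cluster's copy avoids assuming [m > 0]. *)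
Definition wavg u : 'rV[R]_w := m%:R^-1 *: \sum_j u j.

Lemma wavg_const u : (forall j l, u j = u l) -> forall j, u j = wavg u.
Proof.
move=> u_const j; rewrite /wavg (eq_bigr (fun=> u j)) => [|l _]; last exact: u_const.
rewrite sumr_const card_ord -[u j *+ m]scaler_nat scalerA mulVf ?scale1r // pnatr_eq0 -lt0n.
exact: leq_ltn_trans (leq0n _) (ltn_ord j).
Qed.

Lemma ncone_wm_avg u v : (forall j l, u j = u l) -> ncone_wm u v ->
  normal_cone (@orthant R 1 w) (wavg u) (\sum_j v j).
Proof.
move=> u_const [u_ge0 nv]; split.
  move=> i k; rewrite (ord1 i) /wavg mxE summxE; apply: mulr_ge0.
    by rewrite invr_ge0 ler0n.
  by apply: sumr_ge0 => j _; apply: u_ge0.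
move=> Y Y_ge0; rewrite mdot_suml.
under eq_bigr => j _ do rewrite -(wavg_const u_const j).
exact: nv (fun=> Y) (fun j k => Y_ge0 0 k).
Qed.

End Multipliers.

Section KKT.
Variables (R : realType) (m : nat) (n qd : 'I_m -> nat) (w : nat).
Variable W : forall j, 'I_(n j) -> 'I_(n j) -> R.
Arguments W : clear implicits.
Variable f : forall j : 'I_m, 'I_(n j) -> 'M[R]_(n j, qd j) -> others R n qd j -> R.
Variable h : forall j : 'I_m, 'I_(n j) -> 'rV[R]_(qd j) -> \bar R.
Variable A : forall j : 'I_m, 'M[R]_(w, qd j).
Variable bj : wm_t R m w.
Arguments f : clear implicits.
Arguments h : clear implicits.
Implicit Types (x y d lam v : prof R n qd) (X : xhat_t R n qd).

Lemma BF_const X : (forall j i, X j i = Rop X) -> BF f X = Fpg f (Rop X).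
Proof.
move=> XR; apply: functional_extensionality_dep => j; rewrite /Fpg /BF.
by congr (grad _ _); apply: funext => Y; apply: eq_bigr => i _; rewrite XR.
Qed.

Lemma LamT_const (u : wm_t R m w) mu : (forall j, u j = mu) -> LamT n A u = bAT n A mu.
Proof. by move=> umu; apply: functional_extensionality_dep => j; rewrite /LamT /bAT umu. Qed.

Lemma bA_sub x y : bA A (padd y (popp x)) = bA A y - bA A x.
Proof.
rewrite /bA -sumrB; apply: eq_bigr => j _; rewrite -mulmxBl; congr (_ *m _).
by rewrite /lead -sumrB; apply: eq_bigr => i _; apply/rowP => k; rewrite !mxE.
Qed.

Lemma pdot_bAT mu d : pdot (bAT n A mu) d = mdot mu (bA A d).
Proof.
rewrite /bA mdotC mdot_suml; apply: eq_bigr => j _; rewrite [RHS]mdotC.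
rewrite /mdot big_ord1 [LHS]exchange_big /=.
transitivity (\sum_k (mu *m A j) 0 k * lead (d j) 0 k).
  apply: eq_bigr => k _; rewrite /lead summxE mulr_sumr [RHS]big_mkcond /=.
  by apply: eq_bigr => i _; rewrite !mxE; case: ifP => _; rewrite ?mul0r.
rewrite [LHS](eq_bigr (fun k => \sum_r mu 0 r * A j r k * lead (d j) 0 k)); last first.
  by move=> k _; rewrite mxE mulr_suml.
rewrite [LHS]exchange_big; apply: eq_bigr => r _; rewrite mxE mulr_sumr.
by apply: eq_bigr => k' _; rewrite !mxE; ring.
Qed.

Lemma Hset_Omega x v : (forall j i r, h j i r != -oo)%E -> Hset h x v ->
  forall j i, Omega h i (row i (x j)).
Proof.
move=> h_proper xv j i; rewrite /Omega /edom /=.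
have := (xv j).1; rewrite /hj !ltey; apply: contra => /eqP hi.
rewrite esum_eqy; last by move=> i' _; apply: h_proper.
by apply/existsP; exists i; rewrite /= hi eqxx.
Qed.

Lemma Kset_of_kkt x v mu V : (forall j i r, h j i r != -oo)%E ->
  (forall j, wgraph (W j) /\ wconnected (W j)) ->
  Hset h x v -> bL W x = pzero ->
  normal_cone (@orthant R 1 w) mu V -> bsum bj - bA A x + V = 0 ->
  Kset h A bj x.
Proof.
move=> h_proper W_graph xv Lx0 NC feas.
split; first exact: Hset_Omega xv.
split; last exact: (bL_ker_rows W_graph Lx0).
move=> k; have [_ V_le0] := normal_cone_orthant NC.
by move/rowP/(_ k): feas; rewrite !mxE; have := V_le0 0 k; lra.
Qed.

Hypothesis W_sym : forall j i l, W j i l = W j l i.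
Arguments W_sym : clear implicits.

Lemma pdot_bL_consensus lam d :
  (forall j i l, row i (d j) = row l (d j)) -> pdot (bL W lam) d = 0.
Proof.
move=> d_rows; apply: big1 => j _; apply: (mdot_laplacian_const (W_sym j)) => i l k.
by move/rowP/(_ k): (d_rows j i l); rewrite !mxE.
Qed.

(* Pairing the stationarity condition with [y - x] for a feasible [y]: the
   Laplacian term vanishes since [x] and [y] are both consensual, and the
   multiplier term reduces by complementarity to [mu (b - A y) >= 0]. *)
Lemma kkt_GVI_sol x lam mu v V :
  Kset h A bj x -> Hset h x v ->
  padd (padd (padd (Fpg f x) v) (bL W lam)) (bAT n A mu) = pzero ->
  normal_cone (@orthant R 1 w) mu V -> bsum bj - bA A x + V = 0 ->
  GVI_sol f h A bj x.
Proof.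
move=> Kx xv stat NC feas; split=> //; exists v; split=> // y Ky.
have [muV _] := normal_cone_orthant NC.
have d_rows j i l : row i (padd y (popp x) j) = row l (padd y (popp x) j).
  apply/rowP => k; have /rowP/(_ k) := Ky.2.2 j i l.
  by have /rowP/(_ k) := Kx.2.2 j i l; rewrite /padd /popp !mxE => -> ->.
have -> : pdot (padd (Fpg f x) v) (padd y (popp x)) =
    - (pdot (bL W lam) (padd y (popp x)) + pdot (bAT n A mu) (padd y (popp x))).
  rewrite /pdot -big_split -sumrN /=; apply: eq_bigr => j _; rewrite -mdotDl -mdotNl.
  congr mdot; move/(congr1 (fun F : prof R n qd => F j)): stat.
  by rewrite /padd /pzero -addrA => /eqP; rewrite addr_eq0 => /eqP.
rewrite pdot_bL_consensus // pdot_bAT bA_sub mdotBr.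
have -> : bA A x = bsum bj + V by move: feas; rewrite addrAC => /subr0_eq.
have : 0 <= mdot mu (bsum bj - bA A y).
  apply: mdot_ge0 NC.1 _ => i k; rewrite (ord1 i) !mxE subr_ge0; exact: Ky.2.1 k.
by rewrite mdotBr mdotDr (mdotC mu V) muV; lra.
Qed.

End KKT.

Section ZeroOfAB.
Variables (R : realType) (m : nat) (n qd : 'I_m -> nat) (w : nat).
Variables (W : forall j, 'I_(n j) -> 'I_(n j) -> R) (W0 : 'I_m -> 'I_m -> R).
Arguments W : clear implicits.
Variable f : forall j : 'I_m, 'I_(n j) -> 'M[R]_(n j, qd j) -> others R n qd j -> R.
Variable h : forall j : 'I_m, 'I_(n j) -> 'rV[R]_(qd j) -> \bar R.
Variable A : forall j : 'I_m, 'M[R]_(w, qd j).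
Variables (bj : wm_t R m w) (c : R).
Hypothesis W_graph : forall j : 'I_m, wgraph (W j) /\ wconnected (W j).
Hypothesis W0_graph : wgraph W0 /\ wconnected W0.

Lemma zer_AB_blocks Xs zs lams mus : zer_AB W W0 f h A bj c (Xs, zs, lams, mus) ->
  exists v (mu' : wm_t R m w), Hset h (Rop Xs) v /\ ncone_wm mus mu' /\
  [/\ forall j (i : 'I_(n j)) l,
        RT (padd (padd (padd (BF f Xs) v) (bL W lams)) (LamT n A mus)) j i l
        + c *: (Lhat W Xs i l + L0hat W0 Xs i l) = 0,
      forall j, bL0 W0 mus j = 0,
      bL W (Rop Xs) = pzero &
      bsum bj - bA A (Rop Xs) + \sum_j mu' j = 0].
Proof.
case=> -[[[X' z'] lam'] mu'] [[[v [Hv ->]] [-> [-> Hnc]]]].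
rewrite /pw_add /Aop /pw_zero => -[E1 E2 E3 E4].
exists v, mu'; split=> //; split=> //; split.
- move=> j i l; apply/matrixP => a b.
  move/(congr1 (fun X : xhat_t R n qd => X j i l a b)): E1.
  by rewrite !RT_padd /xadd /xscale /padd /xzero /pzero (bLT_bL W_graph) !mxE; lra.
- by move=> j; move/(congr1 (fun z : wm_t R m w => z j)): E2; rewrite /wadd /wzero addr0.
- apply: functional_extensionality_dep => j; move/(congr1 (fun x : prof R n qd => x j)): E3.
  by rewrite /padd /popp /pzero addr0 => /eqP; rewrite oppr_eq0 => /eqP.
- have : \sum_j (bj j - Lam A (Rop Xs) j - bL0 W0 zs j + mu' j) = 0.
    by apply: big1 => j _; move/(congr1 (fun z : wm_t R m w => z j)): E4.
  by rewrite !big_split /= !sumrN (sum_bL0 W0_graph) subr0.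
Qed.

End ZeroOfAB.

Unset Implicit Arguments.
Set Strict Implicit.

Theorem theorem2 (R : realType) (m : nat) (n qd : 'I_m -> nat) (w : nat)
  (W : forall j : 'I_m, 'I_(n j) -> 'I_(n j) -> R) (W0 : 'I_m -> 'I_m -> R)
  (f : forall j : 'I_m, 'I_(n j) -> 'M[R]_(n j, qd j) -> others R n qd j -> R)
  (h : forall j : 'I_m, 'I_(n j) -> 'rV[R]_(qd j) -> \bar R)
  (A : forall j : 'I_m, 'M[R]_(w, qd j)) (bj : wm_t R m w)
  (c : R) (rho tau : forall j : 'I_m, 'I_(n j) -> R) (sig nu : 'I_m -> R)
  (eta kappa0 kappa : R)
  (Xs : xhat_t R n qd) (zs : wm_t R m w) (lams : prof R n qd) (mus : wm_t R m w) :
  (* standing setting *)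
  (forall j, (0 < n j)%N) -> (forall j, (0 < qd j)%N) ->
  0 < c ->
  (forall j i, 0 < rho j i) -> (forall j i, 0 < tau j i) ->
  (forall j, 0 < sig j) -> (forall j, 0 < nu j) ->
  (* (A1) *)
  (forall j i (y : others R n qd j),
     (forall X, differentiable (fun Y => f j i Y y) X) /\
     continuous (grad (fun Y => f j i Y y)) /\
     convex_fun (fun Y => f j i Y y)) ->
  (forall j i,
     lower_semicontinuous (h j i) /\ econvex_fun (h j i) /\
     (forall y, h j i y != -oo)%E /\
     edom (h j i) !=set0 /\ compact (edom (h j i)) /\ convex_setM (edom (h j i))) ->
  (* (A2) *)
  (exists x, Kset h A bj x) ->
  (exists x, Kset h A bj x /\ forall j i, relint (Omega h i) (row i (x j))) ->
  (* (A3) *)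
  (forall j, wgraph (W j) /\ wconnected (W j)) ->
  wgraph W0 /\ wconnected W0 ->
  (* (A4) *)
  0 < eta ->
  (forall x y, eta * pdot (padd x (popp y)) (padd x (popp y))
                <= pdot (padd (Fpg f x) (popp (Fpg f y))) (padd x (popp y))) ->
  0 <= kappa0 ->
  (forall x y,
     Num.sqrt (pdot (padd (Fpg f x) (popp (Fpg f y))) (padd (Fpg f x) (popp (Fpg f y))))
       <= kappa0 * Num.sqrt (pdot (padd x (popp y)) (padd x (popp y)))) ->
  (* (A5) *)
  (exists x, GVI_sol f h A bj x) ->
  (* (A6) *)
  0 <= kappa ->
  (forall X Y,
     Num.sqrt (pdot (padd (BF f X) (popp (BF f Y))) (padd (BF f X) (popp (BF f Y))))
       <= kappa * Num.sqrt (xdot (xadd X (xopp Y)) (xadd X (xopp Y)))) ->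
  (* (A7) *)
  (exists (sL sL0 : R) (sA : 'I_m -> R) (cn : R),
     is_smax (Lbig W) sL /\ is_smax (L0 W0) sL0 /\
     (forall j, is_smax ((A j)^T *m A j) (sA j)) /\
     is_opnorm (@Psi_inv R m n qd w rho tau sig nu) cn /\
     cn < 1 / (kappa + c * (sL + sL0) + 2 * sL + 2 * sL0
               + 2 * \big[Num.max/0]_(j < m) Num.sqrt (sA j))) ->
  (* varpi* in zer(A + B) *)
  zer_AB W W0 f h A bj c (Xs, zs, lams, mus) ->
  exists (xs : prof R n qd) (mu : 'rV[R]_w),
    (forall j i, Xs j i = xs) /\ (forall j, mus j = mu) /\
    (* partial-information KKT conditions *)
    (exists v, Hset h (Rop Xs) v /\
       xadd (xadd (xadd (RT (BF f Xs)) (RT v)) (RT (bL W lams))) (RT (LamT n A mus))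
         = xzero) /\
    (exists v, normal_cone (@orthant R 1 w) mu v /\ bsum bj - bA A (Rop Xs) + v = 0) /\
    bL W (Rop Xs) = pzero /\
    (* full-information KKT conditions *)
    (exists v, Hset h xs v /\
       padd (padd (padd (Fpg f xs) v) (bL W lams)) (bAT n A mu) = pzero) /\
    (exists v, normal_cone (@orthant R 1 w) mu v /\ bsum bj - bA A xs + v = 0) /\
    bL W xs = pzero /\
    (* x* solves GVI(Theta, K), i.e. is a v-GNE *)
    GVI_sol f h A bj xs.
Proof.
move=> n_gt0 _ c_gt0 _ _ _ _ _ Hh _ _ W_graph W0_graph _ _ _ _ _ _ _ _ zer.
have [v [mu' [Hv [Hnc [E1 E2 Lx0 feas]]]]] := zer_AB_blocks W_graph W0_graph zer.
have [u0 LX] := RT_laplacian_split W_graph W0_graph n_gt0 (lt0r_neq0 c_gt0) E1.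
have XR := consensus_Rop W_graph W0_graph n_gt0 LX.
have mus_const := bL0_ker_const W0_graph E2.
have mu_eq := wavg_const mus_const.
have NC := ncone_wm_avg mus_const Hnc.
have stat : padd (padd (padd (Fpg f (Rop Xs)) v) (bL W lams)) (bAT n A (wavg mus)) = pzero.
  by rewrite -(BF_const f XR) -(LamT_const _ _ mu_eq).
have Kx := Kset_of_kkt (fun j i => (Hh j i).2.2.1) W_graph Hv Lx0 NC feas.
exists (Rop Xs), (wavg mus); do 2!split=> //.
split; first by exists v; split=> //; rewrite -!RT_padd u0 RT_pzero.
split; first by exists (\sum_j mu' j).
split=> //; split; first by exists v.
split; first by exists (\sum_j mu' j).
split=> //; exact: (kkt_GVI_sol (fun j => (W_graph j).1.1) Kx Hv stat NC feas).
Qed.
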